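(* Let $n\in\mathbb{N}$, let $p,q:\mathbb{R}^n\to\mathbb{R}$ be polynomials, let $\epsilon>0$, and let $a_j,b_j\in\mathbb{R}$ with $a_j<b_j$ for $j\in\{1,\dots,n\}$. Set $\Omega:=[a_1,b_1]\times[a_2,b_2]\times\dots\times[a_n,b_n]$ and assume that $\min_\Omega|q|>0$. Then \[ \left|\min_{\Omega,\epsilon}\frac{p}{q}-\min_\Omega\frac{p}{q}\right|\leq\frac{\epsilon}{\min_\Omega q^2},\qquad \left|\max_{\Omega,\epsilon}\frac{p}{q}-\max_\Omega\frac{p}{q}\right|\leq\frac{\epsilon}{\min_\Omega q^2}, \] and \[ \left|\left\|\frac{p}{q}\right\|_{L^\infty(\Omega,\epsilon)}-\left\|\frac{p}{q}\right\|_{L^\infty(\Omega)}\right|\leq\frac{\epsilon}{\min_\Omega q^2}. \]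
   Context: Chebyshev polynomials $T_m$ are defined by $T_m(\cos z)=\cos(mz)$. For a polynomial $P:\mathbb{C}^n\to\mathbb{C}$ written as $P(x^1,\dots,x^n)=\sum_{j_1,\dots,j_n} c_{j_1\dots j_n}T_{j_1}(x^1)\cdots T_{j_n}(x^n)$, its T-norm on $[-1,1]^n$ is $\sum|c_{j_1\dots j_n}|$; on a box $[a_1,b_1]\times\dots\times[a_n,b_n]$ the T-norm $\|P\|_{T(\cdot)}$ is the T-norm on $[-1,1]^n$ of $P$ composed with the affine maps $x\mapsto \frac{b_j-a_j}{2}x+\frac{a_j+b_j}{2}$ in each variable. With $\Omega$, $p$, $q$, $\epsilon$ as in the claim, set for $j\in\{1,\dots,n\}$ \[ M_j:=\min\left\{m\in\mathbb{N}: m\geq\frac{n}{\epsilon}(b_j-a_j)\|\partial_jp\,q-p\,\partial_jq\|_{T(\Omega)}\right\} \] and the grid \[ \Lambda:=\left\{\left(a_1+\tfrac{b_1-a_1}{M_1}k_1,\dots,a_n+\tfrac{b_n-a_n}{M_n}k_n\right): k_j\in[0,M_j]\cap\mathbb{Z}\right\}. \] Then by definition $\max_{\Omega,\epsilon}\frac{p}{q}:=\max_\Lambda\frac{p}{q}$, $\min_{\Omega,\epsilon}\frac{p}{q}:=\min_\Lambda\frac{p}{q}$, and $\left\|\frac{p}{q}\right\|_{L^\infty(\Omega,\epsilon)}:=\max_\Lambda\left|\frac{p}{q}\right|$. *)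

From HB Require Import structures.
From mathcomp Require Import all_boot all_order all_algebra.
From mathcomp Require Import boolp classical_sets reals.
From mathcomp Require Import mpoly.

Set Implicit Arguments.
Unset Strict Implicit.
Unset Printing Implicit Defensive.

Import Order.TTheory GRing.Theory Num.Theory.
Local Open Scope ring_scope.
Local Open Scope classical_set_scope.

(* Chebyshev polynomials of the first kind, T_0 = 1, T_1 = X,
   T_(m+2) = 2 X T_(m+1) - T_m ; equivalently T_m (cos z) = cos (m z). *)
Section Cheb.
Variable R : comNzRingType.
Fixpoint cheb_pair (m : nat) : {poly R} * {poly R} :=
  match m with
  | 0 => (1, 'X)
  | m'.+1 => let: (t0, t1) := cheb_pair m' in (t1, 2%:R *: ('X * t1) - t0)
  end.
Definition cheb (m : nat) : {poly R} := (cheb_pair m).1.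
End Cheb.

Section Defs.
Variables (R : realType) (n : nat).

Definition chebX (m : nat) (i : 'I_n) : {mpoly R[n]} :=
  (map_poly (@mpolyC n R) (cheb R m)).['X_i].

Definition chebM (m : 'X_{1..n}) : {mpoly R[n]} := \prod_(i < n) chebX (m i) i.

(* C (a polynomial used only as a finitely supported family of coefficients
   indexed by multi-indices) is a Chebyshev expansion of P *)
Definition cheb_expansion (C P : {mpoly R[n]}) : Prop :=
  P = \sum_(m <- msupp C) C@_m *: chebM m.

Definition Tnorm (P : {mpoly R[n]}) : R :=
  let C := xget 0 (cheb_expansion ^~ P) in \sum_(m <- msupp C) `|C@_m|.

Definition box_affine (a b : 'I_n -> R) : n.-tuple {mpoly R[n]} :=
  [tuple ((b i - a i) / 2%:R) *: 'X_i + ((a i + b i) / 2%:R)%:MP | i < n].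

Definition TnormBox (a b : 'I_n -> R) (P : {mpoly R[n]}) : R :=
  Tnorm (P \mPo box_affine a b).

Definition box (a b : 'I_n -> R) : set ('I_n -> R) :=
  [set x | forall i, a i <= x i <= b i].

Definition minOn (A : set ('I_n -> R)) (f : ('I_n -> R) -> R) : R :=
  inf [set f x | x in A].
Definition maxOn (A : set ('I_n -> R)) (f : ('I_n -> R) -> R) : R :=
  sup [set f x | x in A].

Definition ratf (p q : {mpoly R[n]}) : ('I_n -> R) -> R :=
  fun x => p.@[x] / q.@[x].

(* M_j := min { m in N : m >= (n/eps) (b_j - a_j) || d_j p q - p d_j q ||_T(Omega) } *)
Definition gridM (a b : 'I_n -> R) (eps : R) (p q : {mpoly R[n]}) (j : 'I_n) : nat :=
  `| Num.ceil ((n%:R / eps) * (b j - a j) *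
        TnormBox a b (p^`M(j) * q - p * q^`M(j))) |%N.

Definition grid (a b : 'I_n -> R) (eps : R) (p q : {mpoly R[n]}) : set ('I_n -> R) :=
  [set x | exists k : 'I_n -> nat, forall j,
      (k j <= gridM a b eps p q j)%N /\
      x j = a j + (b j - a j) / (gridM a b eps p q j)%:R * (k j)%:R].

Definition maxOmegaEps a b eps p q := maxOn (grid a b eps p q) (ratf p q).
Definition minOmegaEps a b eps p q := minOn (grid a b eps p q) (ratf p q).
Definition LinfOmegaEps a b eps p q :=
  maxOn (grid a b eps p q) (fun x => `|ratf p q x|).

End Defs.

From HB Require Import structures.
From mathcomp Require Import all_boot all_order all_algebra.
From mathcomp Require Import boolp classical_sets functions reals.
From mathcomp Require Import mpoly.
From mathcomp Require Import normedtype derive realfun.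
From mathcomp Require Import ring lra.
Set Implicit Arguments.
Unset Strict Implicit.
Unset Printing Implicit Defensive.

Import Order.TTheory GRing.Theory Num.Theory.
Import numFieldNormedType.Exports.
Local Open Scope ring_scope.
Local Open Scope classical_set_scope.

(* Every polynomial has a Chebyshev expansion and |T_m| <= 1 on [-1, 1], so a
   polynomial is bounded on the box by its T-norm there.  Applied to the
   numerators d_j p q - p d_j q of the partial derivatives of p/q, this makes
   p/q Lipschitz in each coordinate (mean value theorem), with constant
   L_j = ||d_j p q - p d_j q||_T / min q^2, hence |p/q(x) - p/q(y)| <=
   sum_j L_j |x_j - y_j|.  The choice of M_j gives every point x of the box
   a grid point g with L_j |x_j - g_j| <= eps / (n min q^2) for all j, so
   p/q(x) and p/q(g) differ by at most eps / min q^2, and so do the extrema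
   of p/q over the grid and over the box. *)

Section ChebyshevPell.
Variable R : comNzRingType.
Implicit Types (t : R) (m : nat).

(* [chebTU t m] = (T_m(t), U_(m-1)(t)) with U the Chebyshev polynomials of the
   second kind; the Pell identity T_m^2 + (1 - t^2) U_(m-1)^2 = 1 is what
   bounds T_m on [-1, 1]. *)
Fixpoint chebTU (t : R) (m : nat) : R * R :=
  if m is m'.+1 then
    let: (c, s) := chebTU t m' in (t * c - (1 - t ^+ 2) * s, c + t * s)
  else (1, 0).

Lemma chebTU_pell (t : R) m :
  (chebTU t m).1 ^+ 2 + (1 - t ^+ 2) * (chebTU t m).2 ^+ 2 = 1.
Proof.
elim: m => [|m IHm] /=; first by rewrite expr1n expr0n /= mulr0 addr0.
by case: (chebTU t m) IHm => c s /= IHm; rewrite -[RHS]IHm; ring.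
Qed.

Lemma chebTU_rec (t : R) m :
  (chebTU t m.+2).1 = 2 * t * (chebTU t m.+1).1 - (chebTU t m).1.
Proof. by rewrite /=; case: (chebTU t m) => c s /=; ring. Qed.

Lemma cheb_pair_horner (t : R) m :
  (cheb_pair R m).1.[t] = (chebTU t m).1 /\
  (cheb_pair R m).2.[t] = (chebTU t m.+1).1.
Proof.
elim: m => [|m [IH1 IH2]]; first by split; rewrite /= ?hornerE //; ring.
rewrite [cheb_pair R m.+1]/=; case: (cheb_pair R m) IH1 IH2 => t0 t1 /= IH1 IH2.
split=> //; rewrite chebTU_rec -IH1 -IH2.
by rewrite hornerD hornerN hornerZ hornerM hornerX mulrA.
Qed.

End ChebyshevPell.

Lemma cheb_horner_le1 (R : realDomainType) (t : R) m :
  `|t| <= 1 -> `|(cheb R m).[t]| <= 1.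
Proof.
move=> t_le1; rewrite /cheb (cheb_pair_horner t m).1.
have := chebTU_pell t m; set c := (chebTU t m).1; set s := (chebTU t m).2 => pell.
have t2_le1 : 0 <= 1 - t ^+ 2.
  by move: t_le1; rewrite ler_norml => /andP[? ?]; nra.
have s2_ge0 : 0 <= (1 - t ^+ 2) * s ^+ 2 by rewrite mulr_ge0 ?sqr_ge0.
by rewrite ler_norml; apply/andP; split; nra.
Qed.

Lemma big_msupp_superset (R : nzRingType) (V : lmodType R) n
    (C : {mpoly R[n]}) (F : 'X_{1..n} -> V) (r : seq 'X_{1..n}) :
  uniq r -> {subset msupp C <= r} ->
  \sum_(m <- r) C@_m *: F m = \sum_(m <- msupp C) C@_m *: F m.
Proof.
move=> r_uniq C_r; rewrite (bigID (mem (msupp C))) /=.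
rewrite [X in _ + X]big1 ?addr0; last by move=> m /memN_msupp_eq0 ->; rewrite scale0r.
rewrite -big_filter; apply/perm_big/uniq_perm; rewrite ?filter_uniq ?msupp_uniq //.
by move=> m; rewrite mem_filter andb_idr //; apply: C_r.
Qed.

Section ChebyshevExpansion.
Variables (R : realType) (n : nat).
Implicit Types (P C : {mpoly R[n]}) (m : 'X_{1..n}) (i : 'I_n).

Definition has_cheb_expansion P := exists C, cheb_expansion C P.

Lemma has_cheb_expansion0 : has_cheb_expansion 0.
Proof. by exists 0; rewrite /cheb_expansion msupp0 big_nil. Qed.

Lemma has_cheb_expansionD P1 P2 :
  has_cheb_expansion P1 -> has_cheb_expansion P2 ->
  has_cheb_expansion (P1 + P2).
Proof.
move=> [C1 ->] [C2 ->]; exists (C1 + C2); rewrite /cheb_expansion.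
pose r := undup (msupp C1 ++ msupp C2); have r_uniq : uniq r := undup_uniq _.
have sub1 : {subset msupp C1 <= r} by move=> m m1; rewrite mem_undup mem_cat m1.
have sub2 : {subset msupp C2 <= r}.
  by move=> m m2; rewrite mem_undup mem_cat m2 orbT.
rewrite -(big_msupp_superset _ r_uniq sub1) -(big_msupp_superset _ r_uniq sub2).
rewrite -(big_msupp_superset (C := C1 + C2) _ r_uniq); last first.
  by move=> m /msuppD_le; rewrite mem_undup.
by rewrite -big_split; apply: eq_bigr => m _; rewrite mcoeffD scalerDl.
Qed.

Lemma has_cheb_expansionZ c P :
  has_cheb_expansion P -> has_cheb_expansion (c *: P).
Proof.
move=> [C ->]; exists (c *: C); rewrite /cheb_expansion.
rewrite -(big_msupp_superset (C := c *: C) _ (msupp_uniq C)); last exact: msuppZ_le.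
by rewrite scaler_sumr; apply: eq_bigr => m _; rewrite mcoeffZ scalerA.
Qed.

Lemma has_cheb_expansion_sum (I : Type) (r : seq I) (F : I -> {mpoly R[n]}) :
  (forall k, has_cheb_expansion (F k)) -> has_cheb_expansion (\sum_(k <- r) F k).
Proof.
move=> FP; elim/big_rec: _ => [|k P _ PP]; first exact: has_cheb_expansion0.
exact: has_cheb_expansionD (FP k) PP.
Qed.

Lemma has_cheb_expansion_chebM m : has_cheb_expansion (chebM R m).
Proof.
by exists 'X_[m]; rewrite /cheb_expansion msuppX big_seq1 mcoeffX eqxx scale1r.
Qed.

Lemma chebX0 i : chebX R 0 i = 1.
Proof. by rewrite /chebX (_ : cheb R 0 = 1) // rmorph1 hornerC. Qed.

Lemma chebX1 i : chebX R 1 i = 'X_i.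
Proof. by rewrite /chebX (_ : cheb R 1 = 'X) // map_polyX hornerX. Qed.

Lemma mulX_cheb k : 'X * cheb R k.+1 = 2^-1 *: (cheb R k.+2 + cheb R k).
Proof.
rewrite /cheb /=; case: (cheb_pair R k) => t0 t1 /=.
by rewrite addrNK scalerA mulVf ?scale1r ?pnatr_eq0.
Qed.

Lemma mulX_chebX i k :
  'X_i * chebX R k.+1 i = 2^-1 *: (chebX R k.+2 i + chebX R k i).
Proof.
have: map_poly (@mpolyC n R) ('X * cheb R k.+1) =
      map_poly (@mpolyC n R) (2^-1 *: (cheb R k.+2 + cheb R k)) by rewrite mulX_cheb.
rewrite rmorphM /= map_polyX map_polyZ rmorphD /= => /(congr1 (horner^~ 'X_i)).
by rewrite hornerM hornerX hornerZ hornerD mul_mpolyC.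
Qed.

Lemma chebM0 : chebM R (0%MM : 'X_{1..n}) = 1.
Proof. by rewrite /chebM big1 // => i _; rewrite mnm0E chebX0. Qed.

Lemma chebM_split m m' i : (forall k, k != i -> m' k = m k) ->
  chebM R m' = chebX R (m' i) i * \prod_(k < n | k != i) chebX R (m k) k.
Proof.
move=> m'_m; rewrite /chebM (bigD1 i) //=; congr (_ * _).
by apply: eq_bigr => k /m'_m ->.
Qed.

Lemma has_cheb_expansion_mulX_chebM i m :
  has_cheb_expansion ('X_i * chebM R m).
Proof.
have Um k : k != i -> (m + U_(i))%MM k = m k.
  by move=> ki; rewrite mnmDE mnm1E eq_sym (negbTE ki) addn0.
have Dm k : k != i -> (m - U_(i))%MM k = m k.
  by move=> ki; rewrite mnmBE mnm1E eq_sym (negbTE ki) subn0.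
move: (chebM_split Um) (chebM_split Dm).
rewrite (@chebM_split m m i) // mulrA mnmDE mnmBE mnm1E eqxx addn1 subn1.
case: (m i) => [|k] /= chebMU chebMD.
  by rewrite chebX0 mulr1 -chebX1 -chebMU; apply: has_cheb_expansion_chebM.
rewrite mulX_chebX -scalerAl mulrDl -chebMU -chebMD.
apply/has_cheb_expansionZ/has_cheb_expansionD; exact: has_cheb_expansion_chebM.
Qed.

Lemma has_cheb_expansion_mulX i P :
  has_cheb_expansion P -> has_cheb_expansion ('X_i * P).
Proof.
move=> [C ->]; rewrite mulr_sumr; apply: has_cheb_expansion_sum => m.
by rewrite -scalerAr; apply/has_cheb_expansionZ/has_cheb_expansion_mulX_chebM.
Qed.

Lemma has_cheb_expansion_all P : has_cheb_expansion P.
Proof.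
elim/mpolyind: P => [|c m P _ _ PP]; first exact: has_cheb_expansion0.
apply: has_cheb_expansionD => //; apply: has_cheb_expansionZ.
rewrite mpolyXE_id; elim/big_rec: _ => [|i P' _ P'P].
  by rewrite -chebM0; apply: has_cheb_expansion_chebM.
elim: (m i) => [|k IHk]; first by rewrite mul1r.
by rewrite exprS -mulrA; apply: has_cheb_expansion_mulX.
Qed.

End ChebyshevExpansion.

Section TnormBound.
Variables (R : realType) (n : nat).
Implicit Types (P : {mpoly R[n]}) (a b y : 'I_n -> R).

Lemma meval_chebX y k i : (chebX R k i).@[y] = (cheb R k).[y i].
Proof.
rewrite /chebX -mevalXU -horner_map -map_poly_comp /=.
by rewrite (eq_map_poly (mevalC y)) map_poly_id.
Qed.

Lemma meval_chebM_le1 y m : (forall i, `|y i| <= 1) -> `|(chebM R m).@[y]| <= 1.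
Proof.
move=> y_le1; rewrite /chebM (big_morph _ (mevalM y) (meval1 y)) normr_prod.
by apply: prodr_ile1 => i _; rewrite normr_ge0 meval_chebX cheb_horner_le1.
Qed.

Lemma meval_le_Tnorm P y : (forall i, `|y i| <= 1) -> `|P.@[y]| <= Tnorm P.
Proof.
move=> y_le1; have := xgetPex 0 (has_cheb_expansion_all P).
rewrite /Tnorm; set C := xget 0 _ => {1}->; rewrite raddf_sum /=.
apply: le_trans (ler_norm_sum _ _ _) _; apply: ler_sum => m _.
by rewrite mevalZ normrM ler_piMr ?normr_ge0 ?meval_chebM_le1.
Qed.

Lemma meval_le_TnormBox a b P w :
  (forall i, a i < b i) -> box a b w -> `|P.@[w]| <= TnormBox a b P.
Proof.
move=> ab w_ab; pose y i := (2 * w i - a i - b i) / (b i - a i).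
have y_le1 i : `|y i| <= 1.
  have ba_gt0 : 0 < b i - a i by rewrite subr_gt0.
  rewrite normrM normfV (gtr0_norm ba_gt0) ler_pdivrMr // mul1r ler_norml.
  by have /andP[? ?] := w_ab i; apply/andP; split; lra.
suff -> : P.@[w] = (P \mPo box_affine a b).@[y] by apply: meval_le_Tnorm.
rewrite comp_mpoly_meval; apply: meval_eq => i.
rewrite /box_affine tnth_mktuple mevalD mevalZ mevalXU mevalC /y.
by field; rewrite subr_eq0 gt_eqF.
Qed.

End TnormBound.

Definition update {I : eqType} {T : Type} (z : I -> T) (j : I) (t : T) : I -> T :=
  fun k => if k == j then t else z k.

Section CoordinateDerivative.
Variables (R : realType) (n : nat).
Implicit Types (P p q : {mpoly R[n]}) (z : 'I_n -> R) (j : 'I_n) (t : R).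

Lemma is_derive_monomial (c K t : R) k :
  is_derive t 1 (fun x : R => c * (x ^+ k * K)) (c * (k%:R * t ^+ k.-1 * K)).
Proof.
have := is_deriveM (is_derive_cst c t 1)
  (is_deriveM (is_deriveX k (is_derive_id t 1)) (is_derive_cst K t 1)).
rewrite [X in is_derive _ _ X _ -> _](_ : _ = fun x : R => c * (x ^+ k * K)).
  move/is_derive_eq; apply.
  by rewrite /= !scaler0 add0r addr0 /GRing.scale /= mulr1 /cst; ring.
by apply/funext => x /=; rewrite !mulrfctE exprfctE.
Qed.

Lemma prod_update_expn z j t (m : 'X_{1..n}) :
  \prod_(k < n) update z j t k ^+ m k = t ^+ m j * \prod_(k < n | k != j) z k ^+ m k.
Proof.
rewrite (bigD1 j) //= /update eqxx; congr (_ * _).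
by apply: eq_bigr => k /negbTE ->.
Qed.

Lemma is_derive_meval_update P z j t :
  is_derive t 1 (fun x => P.@[update z j x]) (P^`M(j)).@[update z j t].
Proof.
elim/mpolyind: P => [|c m P _ _ IHP].
  rewrite mderiv0 meval0 (_ : (fun _ => _) = cst 0); first exact: is_derive_cst.
  by apply/funext => x; rewrite meval0.
set K := \prod_(k < n | k != j) z k ^+ m k.
rewrite (_ : (fun x => _) = (fun x => c * (x ^+ m j * K)) + (fun x => P.@[update z j x])).
  apply: is_derive_eq (is_deriveD (is_derive_monomial c K t (m j)) IHP) _.
  rewrite mderivD mderivZ mderivX mevalD !mevalZ mevalX prod_update_expn.
  rewrite mnmBE mnm1E eqxx subn1 -[in LHS]mulrA; congr (_ * (_ * (_ * _)) + _).
  by apply: eq_bigr => k kj; rewrite mnmBE mnm1E eq_sym (negbTE kj) subn0.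
by apply/funext => x; rewrite addrfctE /= mevalD mevalZ mevalX prod_update_expn.
Qed.

Lemma is_derive_ratf_update p q z j t : q.@[update z j t] != 0 ->
  is_derive t 1 (fun x => ratf p q (update z j x))
    ((p^`M(j) * q - p * q^`M(j)).@[update z j t] / q.@[update z j t] ^+ 2).
Proof.
move=> q_neq0; have := is_deriveM (is_derive_meval_update p z j t)
  (is_deriveV q_neq0 (is_derive_meval_update q z j t)).
rewrite [X in is_derive _ _ X _ -> _](_ : _ = fun x => ratf p q (update z j x)).
  move/is_derive_eq; apply.
  by rewrite mevalB !mevalM /GRing.scale /=; field.
by apply/funext => x; rewrite mulrfctE.
Qed.

End CoordinateDerivative.

Section BoxLipschitz.
Variables (R : realType) (n : nat) (a b : 'I_n -> R).
Implicit Types (z y : 'I_n -> R) (j : 'I_n).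

Lemma box_update z j t : box a b z -> a j <= t <= b j -> box a b (update z j t).
Proof. by move=> z_ab t_ab k; rewrite /update; case: eqP => [->|_]. Qed.

Lemma lipschitz_of_coord_lipschitz (f : ('I_n -> R) -> R) (L : 'I_n -> R) :
  (forall z j s t, box a b z -> a j <= s <= b j -> a j <= t <= b j ->
     `|f (update z j t) - f (update z j s)| <= L j * `|t - s|) ->
  forall z y, box a b z -> box a b y ->
  `|f z - f y| <= \sum_(j < n) L j * `|z j - y j|.
Proof.
move=> fL z y z_ab y_ab; pose mix k (i : 'I_n) := if (i < k)%N then y i else z i.
have mix_ab k : box a b (mix k) by move=> i; rewrite /mix; case: ifP.
suff /(_ n (leqnn n)) : forall k, (k <= n)%N ->
    `|f z - f (mix k)| <= \sum_(j < n | (j < k)%N) L j * `|z j - y j|.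
  rewrite (_ : mix n = y); last by apply/funext => i; rewrite /mix ltn_ord.
  by under eq_bigl do rewrite ltn_ord.
elim=> [|k IHk] lt_kn.
  by rewrite big_pred0 // (_ : mix 0 = z) ?subrr ?normr0.
pose j := Ordinal lt_kn.
have ij_k (i : 'I_n) : (i == j) = (i == k :> nat) by [].
have mixS : mix k.+1 = update (mix k) j (y j).
  by apply/funext => i; rewrite /mix /update ltnS leq_eqVlt -ij_k; case: eqVneq => [->|].
have mixk : mix k = update (mix k) j (z j).
  by apply/funext => i; rewrite /mix /update; case: eqVneq => [->|] //=; rewrite ltnn.
rewrite (bigD1 j) ?leqnn //= addrC (eq_bigl (fun i : 'I_n => (i < k)%N)); last first.
  move=> i; rewrite ltnS leq_eqVlt -ij_k.
  by case: eqVneq => [->|_] /=; rewrite ?andbT // ltnn.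
rewrite -(subrK (f (mix k)) (f z)) -addrA.
apply: le_trans (ler_normD _ _) (lerD (IHk (ltnW lt_kn)) _).
rewrite {1}mixk mixS distrC [`|z j - _|]distrC; apply: fL => //.
Qed.

End BoxLipschitz.

Lemma lipschitz_of_deriv_bound (R : realType) (f df : R -> R) (L s t : R) :
  s <= t -> (forall x, s <= x <= t -> is_derive x 1 f (df x)) ->
  (forall x, s <= x <= t -> `|df x| <= L) -> `|f t - f s| <= L * (t - s).
Proof.
rewrite le_eqVlt => /predU1P[<- _ _|lt_st f'df df_le].
  by rewrite !subrr normr0 mulr0.
have [c] : exists2 c, c \in `]s, t[%R & f t - f s = df c * (t - s).
  apply: MVT => // [x|].
    by rewrite in_itv /= => /andP[? ?]; apply/f'df/andP; split; apply/ltW.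
  apply: derivable_within_continuous => x; rewrite in_itv /= => /f'df f'x.
  exact: (@ex_derive _ _ _ _ _ _ _ f'x).
rewrite in_itv /= => /andP[sc ct] ->; rewrite normrM [`|t - s|]gtr0_norm ?subr_gt0 //.
by apply: ler_wpM2r; [rewrite subr_ge0 ltW | apply: df_le; rewrite !ltW].
Qed.

Section RationalFunctionOnBox.
Variables (R : realType) (n : nat) (p q : {mpoly R[n]}) (a b : 'I_n -> R) (Q : R).
Hypothesis ab : forall j, a j < b j.
Hypothesis Q_gt0 : 0 < Q.
Hypothesis Q_le_q2 : forall x, box a b x -> Q <= q.@[x] ^+ 2.
Implicit Types (x y z : 'I_n -> R) (j : 'I_n).

Lemma box_lower : box a b a.
Proof. by move=> i; rewrite lexx ltW. Qed.

Lemma q_neq0 x : box a b x -> q.@[x] != 0.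
Proof. by move=> /Q_le_q2 Q_le; rewrite -sqrf_eq0 gt_eqF ?(lt_le_trans Q_gt0). Qed.

Definition ratf_numer j := p^`M(j) * q - p * q^`M(j).

Definition ratf_lipc j := TnormBox a b (ratf_numer j) / Q.

Lemma ratf_lipc_ge0 j : 0 <= ratf_lipc j.
Proof.
apply: divr_ge0 (ltW Q_gt0).
exact: le_trans (normr_ge0 _) (meval_le_TnormBox _ ab box_lower).
Qed.

Lemma partial_ratf_le x j : box a b x ->
  `|(ratf_numer j).@[x] / q.@[x] ^+ 2| <= ratf_lipc j.
Proof.
move=> x_ab; have q2_gt0 := lt_le_trans Q_gt0 (Q_le_q2 x_ab).
rewrite normrM normfV (gtr0_norm q2_gt0) ler_pdivrMr //.
apply: le_trans (meval_le_TnormBox _ ab x_ab) _.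
rewrite -(divfK (lt0r_neq0 Q_gt0) (TnormBox _ _ _)).
exact: ler_wpM2l (ratf_lipc_ge0 j) _ _ (Q_le_q2 x_ab).
Qed.

Lemma ratf_coord_lipschitz z j s t :
  box a b z -> a j <= s <= b j -> a j <= t <= b j ->
  `|ratf p q (update z j t) - ratf p q (update z j s)| <= ratf_lipc j * `|t - s|.
Proof.
wlog le_st : s t / s <= t.
  move=> wlog_st z_ab s_ab t_ab; have [le_st|le_ts] := leP s t; first exact: wlog_st.
  by rewrite distrC [`|t - s|]distrC wlog_st // ltW.
move=> z_ab /andP[a_s s_b] /andP[a_t t_b]; rewrite [`|t - s|]ger0_norm ?subr_ge0 //.
have upd_ab (u : R) : s <= u <= t -> box a b (update z j u).
  by move=> /andP[su ut]; apply: box_update => //; rewrite (le_trans a_s su) (le_trans ut t_b).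
apply: (lipschitz_of_deriv_bound (f := fun u => ratf p q (update z j u))) => // u /upd_ab u_ab.
  exact/is_derive_ratf_update/q_neq0.
exact: partial_ratf_le.
Qed.

Lemma ratf_lipschitz x y : box a b x -> box a b y ->
  `|ratf p q x - ratf p q y| <= \sum_(j < n) ratf_lipc j * `|x j - y j|.
Proof. exact/lipschitz_of_coord_lipschitz/ratf_coord_lipschitz. Qed.

Lemma grid_sub_box eps : grid a b eps p q `<=` box a b.
Proof.
move=> g [k gk] j; have [le_kM ->] := gk j; set M := gridM a b eps p q j.
have ba_gt0 : 0 < b j - a j by rewrite subr_gt0.
have [M0|M_gt0] := posnP M.
  by rewrite M0 invr0 mulr0 mul0r addr0 lexx (ltW (ab j)).
have step_ge0 : 0 <= (b j - a j) / M%:R * (k j)%:R.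
  by rewrite mulr_ge0 ?divr_ge0 ?ler0n // ltW.
have : (b j - a j) / M%:R * (k j)%:R <= b j - a j.
  by rewrite mulrAC ler_pdivrMr ?ltr0n // ler_pM2l // ler_nat.
by move=> ?; apply/andP; split; lra.
Qed.

Lemma ratf_bounded : exists K, forall x, box a b x -> `|ratf p q x| <= K.
Proof.
exists (`|ratf p q a| + \sum_(j < n) ratf_lipc j * (b j - a j)) => x x_ab.
rewrite -(subrK (ratf p q a) (ratf p q x)) addrC.
apply: le_trans (ler_normD _ _) _; rewrite lerD2l.
apply: le_trans (ratf_lipschitz x_ab box_lower) _.
apply: ler_sum => j _; apply: ler_wpM2l; first exact: ratf_lipc_ge0.
by have /andP[? ?] := x_ab j; rewrite ger0_norm ?subr_ge0 // lerD2r.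
Qed.

Variable eps : R.
Hypothesis eps_gt0 : 0 < eps.

Lemma ratf_lipc_width_le j :
  ratf_lipc j * (b j - a j) <= (gridM a b eps p q j)%:R * (eps / (n%:R * Q)).
Proof.
have n_gt0 : 0 < n%:R :> R by rewrite ltr0n (leq_ltn_trans _ (ltn_ord j)).
have -> : ratf_lipc j * (b j - a j) =
    n%:R / eps * (b j - a j) * TnormBox a b (ratf_numer j) * (eps / (n%:R * Q)).
  by rewrite /ratf_lipc; field; rewrite !gt_eqF.
apply: ler_wpM2r; first by rewrite divr_ge0 ?mulr_ge0 ?ltW.
by rewrite /gridM natr_absz (le_trans (ceil_ge _)) // ler_int ler_norm.
Qed.

Lemma exists_grid_coord x j : a j <= x j <= b j ->
  exists k, (k <= gridM a b eps p q j)%N /\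
    ratf_lipc j * `|x j - (a j + (b j - a j) / (gridM a b eps p q j)%:R * k%:R)|
      <= eps / (n%:R * Q).
Proof.
move=> xj_ab; have lip_le := ratf_lipc_width_le j; set M := gridM a b eps p q j in lip_le *.
have ba_gt0 : 0 < b j - a j by rewrite subr_gt0.
have nQ_gt0 : 0 < n%:R * Q by rewrite mulr_gt0 // ltr0n (leq_ltn_trans _ (ltn_ord j)).
have [M0|M_gt0] := posnP M.
  (* the grid degenerates to [a j] (as [_ / 0 = 0]), but then [ratf_lipc j = 0] *)
  exists 0%N; split => //; suff -> : ratf_lipc j = 0 by rewrite mul0r divr_ge0 ?ltW.
  apply/eqP; rewrite eq_le ratf_lipc_ge0 andbT -(pmulr_lle0 _ ba_gt0).
  by rewrite M0 mul0r in lip_le.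
pose u := (x j - a j) / (b j - a j) * M%:R.
have /andP[a_x x_b] := xj_ab.
have u_ge0 : 0 <= u by rewrite mulr_ge0 ?divr_ge0 ?subr_ge0 ?ler0n // ltW.
have u_leM : u <= M%:R by apply: ler_piMl; rewrite ?ler_pdivrMr // mul1r lerD2r.
exists (Num.truncn u); split; first by rewrite -[M in (_ <= M)%N](natrK (R := R)) le_truncn.
have /andP[tr_le tr_gt] := truncn_itv u_ge0.
have -> : x j - (a j + (b j - a j) / M%:R * (Num.truncn u)%:R) =
    (b j - a j) / M%:R * (u - (Num.truncn u)%:R).
  by rewrite /u; field; rewrite !gt_eqF ?ltr0n.
have step_ge0 : 0 <= (b j - a j) / M%:R by rewrite divr_ge0 ?ler0n ?ltW.
have frac_le1 : u - (Num.truncn u)%:R <= 1 by move: tr_gt; rewrite -natr1; lra.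
rewrite normrM ger0_norm // ger0_norm ?subr_ge0 //.
apply: le_trans (_ : ratf_lipc j * ((b j - a j) / M%:R) <= _).
  exact/(ler_wpM2l (ratf_lipc_ge0 j))/ler_piMr.
by rewrite mulrA ler_pdivrMr ?ltr0n // [_ * M%:R]mulrC.
Qed.

Lemma exists_grid_near x : box a b x ->
  exists2 g, grid a b eps p q g & `|ratf p q x - ratf p q g| <= eps / Q.
Proof.
move=> x_ab; have /choice[k kP] := fun j => exists_grid_coord (x_ab j).
pose g j := a j + (b j - a j) / (gridM a b eps p q j)%:R * (k j)%:R.
have g_grid : grid a b eps p q g by exists k => j; have [] := kP j.
exists g => //; apply: le_trans (ratf_lipschitz x_ab (grid_sub_box g_grid)) _.
apply: le_trans (_ : \sum_(j < n) eps / (n%:R * Q) <= _).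
  by apply: ler_sum => j _; have [] := kP j.
rewrite sumr_const card_ord; have [->|n_gt0] := posnP n.
  by rewrite mulr0n divr_ge0 ?ltW.
rewrite (_ : eps / (n%:R * Q) *+ n = eps / Q) //.
by rewrite -(mulr_natr (eps / _)); field; rewrite pnatr_eq0 -lt0n n_gt0 gt_eqF.
Qed.

End RationalFunctionOnBox.

Section DenseSubsetExtrema.
Variables (R : realType) (T : Type) (A B : set T) (h : T -> R) (d : R).
Hypothesis A_sub_B : A `<=` B.
Hypothesis A_neq0 : A !=set0.
Hypothesis h_bounded : exists K, forall x, B x -> `|h x| <= K.
Hypothesis A_dense : forall x, B x -> exists2 g, A g & `|h x - h g| <= d.

Let hA_neq0 : h @` A !=set0.
Proof. by have [g Ag] := A_neq0; exists (h g), g. Qed.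

Let hB_neq0 : h @` B !=set0.
Proof. by have [g Ag] := A_neq0; exists (h g), g => //; apply: A_sub_B. Qed.

Let hB_ubound : has_ubound (h @` B).
Proof.
have [K hK] := h_bounded; exists K => _ [x Bx <-].
by have := hK x Bx; rewrite ler_norml => /andP[].
Qed.

Let hB_lbound : has_lbound (h @` B).
Proof.
have [K hK] := h_bounded; exists (- K) => _ [x Bx <-].
by have := hK x Bx; rewrite ler_norml => /andP[].
Qed.

Let hA_ubound : has_ubound (h @` A).
Proof.
by have [K hK] := hB_ubound; exists K => _ [x Ax <-]; apply: hK; exists x => //; apply: A_sub_B.
Qed.

Let hA_lbound : has_lbound (h @` A).
Proof.
by have [K hK] := hB_lbound; exists K => _ [x Ax <-]; apply: hK; exists x => //; apply: A_sub_B.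
Qed.

Lemma dist_sup_dense_subset : `|sup (h @` A) - sup (h @` B)| <= d.
Proof.
have supA_le : sup (h @` A) <= sup (h @` B).
  apply: ge_sup hA_neq0 _ => _ [g Ag <-]; apply: (ub_le_sup hB_ubound).
  by exists g => //; apply: A_sub_B.
have supB_le : sup (h @` B) <= sup (h @` A) + d.
  apply: ge_sup hB_neq0 _ => _ [x Bx <-]; have [g Ag hxg] := A_dense Bx.
  have : h g <= sup (h @` A) by apply: (ub_le_sup hA_ubound); exists g.
  by move: hxg; rewrite ler_norml => /andP[? ?]; lra.
by rewrite ler_norml; apply/andP; split; lra.
Qed.

Lemma dist_inf_dense_subset : `|inf (h @` A) - inf (h @` B)| <= d.
Proof.
have infB_le : inf (h @` B) <= inf (h @` A).
  apply: lb_le_inf hA_neq0 _ => _ [g Ag <-]; apply: (ge_inf hB_lbound).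
  by exists g => //; apply: A_sub_B.
have infA_le : inf (h @` A) - d <= inf (h @` B).
  apply: lb_le_inf hB_neq0 _ => _ [x Bx <-]; have [g Ag hxg] := A_dense Bx.
  have : inf (h @` A) <= h g by apply: (ge_inf hA_lbound); exists g.
  by move: hxg; rewrite ler_norml => /andP[? ?]; lra.
by rewrite ler_norml; apply/andP; split; lra.
Qed.

End DenseSubsetExtrema.

Lemma minOn_le (R : realType) n (A : set ('I_n -> R)) f x :
  (forall y, 0 <= f y) -> A x -> minOn A f <= f x.
Proof. by move=> f_ge0 Ax; apply: ge_inf; [exists 0 => _ [y _ <-] | exists x]. Qed.

Lemma minOn_sqr_gt0 (R : realType) n (A : set ('I_n -> R)) f :
  A !=set0 -> 0 < minOn A (fun x => `|f x|) -> 0 < minOn A (fun x => f x ^+ 2).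
Proof.
move=> [x0 Ax0] m_gt0; apply: lt_le_trans (exprn_gt0 2 m_gt0) _.
apply: lb_le_inf => [|_ [x Ax <-]]; first by exists (f x0 ^+ 2), x0.
have m_le := minOn_le (fun y => normr_ge0 (f y)) Ax.
rewrite -[f x ^+ 2]real_normK ?num_real //; have := normr_ge0 (f x); nra.
Qed.

Theorem lemma5p22 (R : realType) (n : nat) (p q : {mpoly R[n]}) (eps : R)
    (a b : 'I_n -> R) :
  0 < eps ->
  (forall j, a j < b j) ->
  0 < minOn (box a b) (fun x => `|q.@[x]|) ->
  let Omega := box a b in
  let qmin2 := minOn Omega (fun x => q.@[x] ^+ 2) in
  [/\ `|minOmegaEps a b eps p q - minOn Omega (ratf p q)| <= eps / qmin2,
      `|maxOmegaEps a b eps p q - maxOn Omega (ratf p q)| <= eps / qmin2 &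
      `|LinfOmegaEps a b eps p q - maxOn Omega (fun x => `|ratf p q x|)|
         <= eps / qmin2].
Proof.
move=> eps_gt0 ab q_gt0 Omega qmin2.
have Q_le_q2 x : Omega x -> qmin2 <= q.@[x] ^+ 2 by apply: minOn_le => y; apply: sqr_ge0.
have Q_gt0 : 0 < qmin2 by apply: minOn_sqr_gt0 q_gt0; exists a; apply: box_lower.
have grid_near := exists_grid_near p ab Q_gt0 Q_le_q2 eps_gt0.
have grid_sub : grid a b eps p q `<=` Omega := grid_sub_box ab (eps := eps).
have grid_neq0 : grid a b eps p q !=set0.
  by have [g ? _] := grid_near a (box_lower ab); exists g.
have ratf_bdd := ratf_bounded p ab Q_gt0 Q_le_q2.
have abs_ratf_bdd : exists K, forall x, Omega x -> `| `|ratf p q x| | <= K.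
  by have [K ratf_le] := ratf_bdd; exists K => x /ratf_le; rewrite normr_id.
have abs_grid_near x : Omega x ->
    exists2 g, grid a b eps p q g & `| `|ratf p q x| - `|ratf p q g| | <= eps / qmin2.
  move=> /grid_near[g ? ?]; exists g => //; exact: le_trans (ler_dist_dist _ _) _.
split.
- exact: dist_inf_dense_subset grid_sub grid_neq0 ratf_bdd grid_near.
- exact: dist_sup_dense_subset grid_sub grid_neq0 ratf_bdd grid_near.
- exact: dist_sup_dense_subset grid_sub grid_neq0 abs_ratf_bdd abs_grid_near.
Qed.
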